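(* Up to shifting and reversing indices, there is exactly one 4-chain having three consecutive equal terms, namely the 4-chain $(u_n)$ with $u_0=u_1=u_2=u_3=-1$ (whose neighbouring terms are $u_{-1}=u_4=1$, $u_{-2}=u_5=-3$, $u_{-3}=u_6=-17$, $u_{-4}=u_7=1541,\dots$).
   Context: A 4-chain is a bi-infinite sequence of integers $(u_n)_{n\in\mathbb Z}$ satisfying $u_{n-1}u_{n+1}=u_n^3+u_n^{f(n)}+1$ for all $n\in\mathbb Z$, where $f(n)=1$ if $n\equiv 0,3\pmod 4$ and $f(n)=2$ if $n\equiv 1,2\pmod 4$. Two 4-chains $(u_n)$, $(v_n)$ are considered the same if there is $k\in\mathbb Z$ with $u_n=v_{k+n}$ for all $n$ or $u_n=v_{k-n}$ for all $n$. *)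

From Stdlib Require Import ZArith.
Open Scope Z_scope.

Definition f4 (n : Z) : Z :=
  if orb (n mod 4 =? 1) (n mod 4 =? 2) then 2 else 1.

Definition is_4chain (u : Z -> Z) : Prop :=
  forall n : Z, u (n - 1) * u (n + 1) = u n ^ 3 + u n ^ f4 n + 1.

Definition same_chain (u v : Z -> Z) : Prop :=
  exists k : Z, (forall n, u n = v (k + n)) \/ (forall n, u n = v (k - n)).

Definition has_three_equal (u : Z -> Z) : Prop :=
  exists n : Z, u n = u (n + 1) /\ u (n + 1) = u (n + 2).

(* Write P_n(x) = x^3 + x^f(n) + 1. Two consecutive terms determine a 4-chain,
   since no term can vanish (P_n has no integer root). Three equal terms x
   force x^2 = P_n(x), whose only solution is x = -1 with f(n) = 2; up to a
   shift by a multiple of 4 the chain therefore passes through two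
   consecutive terms -1 of the chain starting -1, -1, -1, -1. That this
   chain exists, i.e. that the forward recursion u_{n+1} = P_n(u_n) / u_{n-1}
   only performs exact divisions, is an exchange argument: modulo u_n we
   have u_{n-1} u_{n+1} = 1, and since f(n-1) + f(n+1) = 3,
   u_{n-1}^3 P_{n+1}(u_{n+1}) = P_{n-1}(u_{n-1}) = 0 modulo u_n. *)
From Stdlib Require Import ZArith Lia.
Open Scope Z_scope.

Lemma f4_cases n :
  (f4 n = 1 /\ (n mod 4 = 0 \/ n mod 4 = 3)) \/
  (f4 n = 2 /\ (n mod 4 = 1 \/ n mod 4 = 2)).
Proof.
  unfold f4; pose proof (Z.mod_pos_bound n 4).
  destruct (Z.eqb_spec (n mod 4) 1), (Z.eqb_spec (n mod 4) 2); simpl; lia.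
Qed.

Ltac f4_by_cases m n :=
  pose proof (Z.mod_pos_bound m 4); pose proof (Z.mod_pos_bound n 4);
  pose proof (Z.div_mod m 4); pose proof (Z.div_mod n 4);
  destruct (f4_cases m) as [[? ?]|[? ?]], (f4_cases n) as [[? ?]|[? ?]]; lia.

Lemma f4_1_or_2 n : f4 n = 1 \/ f4 n = 2.
Proof. destruct (f4_cases n); lia. Qed.

Lemma f4_alternate n :
  f4 (n - 1) = 1 /\ f4 (n + 1) = 2 \/ f4 (n - 1) = 2 /\ f4 (n + 1) = 1.
Proof. f4_by_cases (n - 1) (n + 1). Qed.

Lemma f4_periodic q n : f4 (n + 4 * q) = f4 n.
Proof. f4_by_cases (n + 4 * q) n. Qed.

Lemma f4_reflect n : f4 (3 - n) = f4 n.
Proof. f4_by_cases (3 - n) n. Qed.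

Definition chain_rhs (n x : Z) : Z := x ^ 3 + x ^ f4 n + 1.

Definition chain_at (v : Z -> Z) (n : Z) : Prop :=
  v (n - 1) * v (n + 1) = chain_rhs n (v n).

Lemma cubic_no_int_root x e : e = 1 \/ e = 2 -> x ^ 3 + x ^ e + 1 <> 0.
Proof.
  intros [-> | ->]; rewrite ?Z.pow_1_r, ?Z.pow_2_r;
    replace (x ^ 3) with (x * x * x) by ring;
    (destruct (Z.le_gt_cases 0 x); [nia|]);
    (destruct (Z.eq_dec x (-1)); [subst; lia|]);
    assert (x * x >= 4) by nia; nia.
Qed.

Lemma chain_rhs_neq0 n x : chain_rhs n x <> 0.
Proof. apply cubic_no_int_root, f4_1_or_2. Qed.

Lemma cubic_eq_square x e :
  e = 1 \/ e = 2 -> x * x = x ^ 3 + x ^ e + 1 -> e = 2 /\ x = -1.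
Proof.
  intros [-> | ->] H; rewrite ?Z.pow_1_r, ?Z.pow_2_r in H;
    replace (x ^ 3) with (x * x * x) in H by ring.
  - exfalso.
    destruct (Z.le_gt_cases 2 x); [nia|]. destruct (Z.le_gt_cases x (-2)); [nia|].
    assert (x = -1 \/ x = 0 \/ x = 1) as [-> | [-> | ->]] by lia; lia.
  - split; [reflexivity|].
    destruct (Z.le_gt_cases 0 x); [nia|]. destruct (Z.le_gt_cases x (-2)); [nia | lia].
Qed.

(* With c = x z = 1 mod y: (x z)^3 (z^3 + z^h + 1) = z^3 (c^3 + c^h x^g + x^3),
   which is z^3 (x^3 + x^g + 1) = z^3 w y modulo c - 1. *)
Lemma exchange_divides x y z w g h :
  g = 1 /\ h = 2 \/ g = 2 /\ h = 1 ->
  (y | x * z - 1) -> w * y = x ^ 3 + x ^ g + 1 -> (y | z ^ 3 + z ^ h + 1).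
Proof.
  intros Hgh Hc Hw.
  set (c := x * z) in Hc.
  assert (Hpow : forall p, (p = 1 \/ p = 2 \/ p = 3) -> (y | c ^ p - 1)).
  { intros p Hp; apply (Z.divide_trans _ (c - 1)); [exact Hc|].
    destruct Hp as [-> | [-> | ->]];
      [exists 1 | exists (c + 1) | exists (c ^ 2 + c + 1)]; ring. }
  assert (Hid : z ^ 3 + z ^ h + 1 =
    - (c ^ 3 - 1) * (z ^ 3 + z ^ h + 1)
    + z ^ 3 * ((c ^ 3 - 1) + (c ^ h - 1) * x ^ g + w * y)).
  { rewrite Hw; unfold c; destruct Hgh as [[-> ->] | [-> ->]]; ring. }
  rewrite Hid.
  assert (y | c ^ h - 1) by (apply Hpow; lia).
  assert (y | c ^ 3 - 1) by (apply Hpow; lia).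
  apply Z.divide_add_r; [apply Z.divide_mul_l, Z.divide_opp_r; assumption|].
  apply Z.divide_mul_r, Z.divide_add_r; [apply Z.divide_add_r|].
  - assumption.
  - apply Z.divide_mul_l; assumption.
  - apply Z.divide_mul_r, Z.divide_refl.
Qed.

Fixpoint fwd_chain (n : nat) : Z :=
  match n with
  | O | 1%nat => -1
  | S (S m as p) => chain_rhs (Z.of_nat p) (fwd_chain p) / fwd_chain m
  end.

Definition fwd_chain_rel (n : nat) : Prop :=
  fwd_chain n * fwd_chain (n + 2) = chain_rhs (Z.of_nat n + 1) (fwd_chain (n + 1)).

Lemma fwd_chain_rel_step n : fwd_chain_rel n -> fwd_chain_rel (n + 1) -> fwd_chain_rel (n + 2).
Proof.
  unfold fwd_chain_rel, chain_rhs;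
    rewrite !Nat2Z.inj_add, <- !Nat.add_assoc; simpl (_ + _)%nat.
  set (w := fwd_chain n); set (x := fwd_chain (n + 1)); set (y := fwd_chain (n + 2));
    set (z := fwd_chain (n + 3)); set (k := Z.of_nat n).
  intros R0 R1; change (Z.of_nat 1) with 1 in R1.
  assert (Hy : y <> 0).
  { intro E; rewrite E, Z.mul_0_r in R0; symmetry in R0; revert R0.
    apply cubic_no_int_root, f4_1_or_2. }
  assert (Hdiv : (y | z ^ 3 + z ^ f4 (k + 2 + 1) + 1)).
  { apply (exchange_divides x y z w (f4 (k + 1))).
    - pose proof (f4_alternate (k + 2)) as Alt.
      replace (k + 2 - 1) with (k + 1) in Alt by lia; exact Alt.
    - replace (x * z - 1) with (y ^ 3 + y ^ f4 (k + 1 + 1)) by lia.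
      destruct (f4_1_or_2 (k + 1 + 1)) as [-> | ->];
        [exists (y ^ 2 + 1) | exists (y ^ 2 + y)]; ring.
    - exact R0. }
  replace (n + 4)%nat with (S (S (n + 2))) by lia.
  change (fwd_chain (S (S (n + 2))))
    with (chain_rhs (Z.of_nat (S (n + 2))) (fwd_chain (S (n + 2))) / fwd_chain (n + 2)).
  replace (S (n + 2)) with (n + 3)%nat by lia.
  unfold chain_rhs; rewrite Nat2Z.inj_add; fold z y k.
  change (Z.of_nat 3) with 3 in *; change (Z.of_nat 2) with 2 in *.
  replace (k + 3) with (k + 2 + 1) by lia.
  destruct Hdiv as [q ->]; rewrite Z.div_mul by exact Hy; ring.
Qed.

Lemma fwd_chain_rel_all n : fwd_chain_rel n.
Proof.
  enough (H : fwd_chain_rel n /\ fwd_chain_rel (n + 1)) by apply H.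
  induction n as [|n [R0 R1]].
  - split; vm_compute; reflexivity.
  - replace (S n) with (n + 1)%nat by lia; split; [exact R1|].
    replace (n + 1 + 1)%nat with (n + 2)%nat by lia; now apply fwd_chain_rel_step.
Qed.

Definition minus_one_chain (n : Z) : Z :=
  if 0 <=? n then fwd_chain (Z.to_nat n) else fwd_chain (Z.to_nat (3 - n)).

Lemma minus_one_chain_of_nat k : minus_one_chain (Z.of_nat k) = fwd_chain k.
Proof. unfold minus_one_chain; rewrite Nat2Z.id; destruct (Z.leb_spec 0 (Z.of_nat k)); lia. Qed.

Lemma minus_one_chain_reflect n : minus_one_chain (3 - n) = minus_one_chain n.
Proof.
  unfold minus_one_chain.
  destruct (Z.leb_spec 0 (3 - n)), (Z.leb_spec 0 n); try lia.
  - assert (n = 0 \/ n = 1 \/ n = 2 \/ n = 3) as [-> | [-> | [-> | ->]]] by lia;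
      reflexivity.
  - now replace (3 - (3 - n)) with n by lia.
Qed.

Lemma minus_one_chain_initial j : 0 <= j <= 3 -> minus_one_chain j = -1.
Proof.
  intro Hj; assert (j = 0 \/ j = 1 \/ j = 2 \/ j = 3) as [-> | [-> | [-> | ->]]] by lia;
    reflexivity.
Qed.

Lemma chain_at_reflect v n : chain_at v (3 - n) -> chain_at (fun m => v (3 - m)) n.
Proof.
  unfold chain_at, chain_rhs; rewrite f4_reflect; intro H.
  replace (3 - (n - 1)) with (3 - n + 1) by lia.
  replace (3 - (n + 1)) with (3 - n - 1) by lia.
  rewrite Z.mul_comm; exact H.
Qed.

Lemma chain_reflect v : is_4chain v -> is_4chain (fun m => v (3 - m)).
Proof. intros C n; apply chain_at_reflect, C. Qed.

Lemma chain_shift4 v q : is_4chain v -> is_4chain (fun m => v (m + 4 * q)).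
Proof.
  intros C m; pose proof (C (m + 4 * q)) as H; rewrite f4_periodic in H.
  now replace (m - 1 + 4 * q) with (m + 4 * q - 1) by lia;
    replace (m + 1 + 4 * q) with (m + 4 * q + 1) by lia.
Qed.

Lemma minus_one_chain_is_4chain : is_4chain minus_one_chain.
Proof.
  assert (Hpos : forall n, 1 <= n -> chain_at minus_one_chain n).
  { intros n Hn; pose proof (fwd_chain_rel_all (Z.to_nat (n - 1))) as R.
    unfold fwd_chain_rel in R; unfold chain_at.
    rewrite <- !minus_one_chain_of_nat, !Nat2Z.inj_add, Z2Nat.id in R by lia.
    change (Z.of_nat 1) with 1 in R; change (Z.of_nat 2) with 2 in R.
    now replace (n - 1 + 1) with n in R by lia;
      replace (n - 1 + 2) with (n + 1) in R by lia. }
  intro n; destruct (Z.le_gt_cases 1 n) as [Hn | Hn]; [now apply Hpos|].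
  assert (Href : chain_at (fun m => minus_one_chain (3 - m)) n)
    by (apply chain_at_reflect, Hpos; lia).
  unfold chain_at in *; now rewrite !minus_one_chain_reflect in Href.
Qed.

Lemma chain_neq0 v n : is_4chain v -> v n <> 0.
Proof.
  intros C E; pose proof (C (n + 1)) as H; unfold chain_at in H.
  replace (n + 1 - 1) with n in H by lia.
  rewrite E, Z.mul_0_l in H; symmetry in H; revert H; apply chain_rhs_neq0.
Qed.

Lemma chain_agree_forward v w k :
  is_4chain v -> is_4chain w -> v k = w k -> v (k + 1) = w (k + 1) ->
  forall j : nat, v (k + Z.of_nat j) = w (k + Z.of_nat j).
Proof.
  intros Cv Cw E0 E1 j.
  enough (H : v (k + Z.of_nat j) = w (k + Z.of_nat j) /\
              v (k + Z.of_nat j + 1) = w (k + Z.of_nat j + 1)) by apply H.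
  induction j as [|j [A B]].
  - now rewrite Z.add_0_r.
  - rewrite Nat2Z.inj_succ, <- Z.add_1_r, Z.add_assoc; split; [exact B|].
    set (m := k + Z.of_nat j + 1) in *.
    pose proof (Cv m) as X; pose proof (Cw m) as Y; unfold chain_at in X, Y.
    replace (m - 1) with (k + Z.of_nat j) in X, Y by (unfold m; lia).
    rewrite A, B, <- Y in X.
    apply Z.mul_reg_l in X; [exact X | now apply chain_neq0].
Qed.

Lemma chain_eq_of_two_terms v w k :
  is_4chain v -> is_4chain w -> v k = w k -> v (k + 1) = w (k + 1) ->
  forall n, v n = w n.
Proof.
  intros Cv Cw E0 E1 n; destruct (Z.le_gt_cases k n).
  - replace n with (k + Z.of_nat (Z.to_nat (n - k))) by lia.
    now apply chain_agree_forward.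
  - pose proof (chain_agree_forward _ _ (2 - k) (chain_reflect v Cv) (chain_reflect w Cw))
      as F; cbv beta in F.
    replace (3 - (2 - k)) with (k + 1) in F by lia.
    replace (3 - (2 - k + 1)) with k in F by lia.
    specialize (F E1 E0 (Z.to_nat (k + 1 - n))).
    now replace (3 - (2 - k + Z.of_nat (Z.to_nat (k + 1 - n)))) with n in F by lia.
Qed.

Theorem mainTheorem8 :
  exists u : Z -> Z,
    is_4chain u /\
    u 0 = -1 /\ u 1 = -1 /\ u 2 = -1 /\ u 3 = -1 /\
    has_three_equal u /\
    forall v : Z -> Z, is_4chain v -> has_three_equal v -> same_chain v u.
Proof.
  exists minus_one_chain.
  split; [exact minus_one_chain_is_4chain|].
  repeat split; try (exists 0; split); try reflexivity.
  intros v C [n [E1 E2]].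
  pose proof (C (n + 1)) as Hsq; unfold chain_rhs in Hsq.
  replace (n + 1 - 1) with n in Hsq by lia; replace (n + 1 + 1) with (n + 2) in Hsq by lia.
  rewrite E1, <- E2 in Hsq.
  destruct (cubic_eq_square _ _ (f4_1_or_2 (n + 1)) Hsq) as [F Hx].
  set (q := (n + 1) / 4).
  assert (Hk : 0 <= n - 4 * q <= 1).
  { pose proof (Z.div_mod (n + 1) 4); pose proof (Z.mod_pos_bound (n + 1) 4).
    destruct (f4_cases (n + 1)); unfold q; lia. }
  assert (Hw : forall m, v (m + 4 * q) = minus_one_chain m).
  { apply (chain_eq_of_two_terms _ _ (n - 4 * q) (chain_shift4 v q C)
             minus_one_chain_is_4chain);
      rewrite minus_one_chain_initial by lia;
      [replace (n - 4 * q + 4 * q) with n by lia; lia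
      | replace (n - 4 * q + 1 + 4 * q) with (n + 1) by lia; exact Hx]. }
  exists (- (4 * q)); left; intro m.
  rewrite <- Hw; f_equal; lia.
Qed.
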